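(* Let $k \geq 2$ be an integer. Let $\mathbb{R}^2_+=\{(x,y): y>0\}$ and $\mathbb{R}^2_-=\{(x,y): y<0\}$. Fix a $(k+1)$-element set $K=\{y_1,\ldots,y_{k+1}\} \subset \mathbb{R}^2_-$. Let $U$ be the family of all $k$-element subsets of $\mathbb{R}^2_-$, let $O$ be the initial ordinal of cardinality $\mathfrak{c}=2^{\aleph_0}$ (so $|O|=\mathfrak{c}$ and $|\{\alpha \in O: \alpha<\lambda\}|<\mathfrak{c}$ for every $\lambda\in O$), and let $\lambda \mapsto a^{\lambda}=\{a^{\lambda}_1,\ldots,a^{\lambda}_k\}$ be a bijection from $O$ onto $U$. Then there exist families of sets $\{A_\lambda\}_{\lambda\in O}$ and $\{B_\lambda\}_{\lambda \in O}$, increasing in the sense that $\lambda_1<\lambda_2$ implies $A_{\lambda_1}\subseteq A_{\lambda_2}$ and $B_{\lambda_1}\subseteq B_{\lambda_2}$, such that for every $\lambda \in O$: (1) $A_\lambda, B_\lambda \subset \{(x,0): x \in \mathbb{R}\}$; (2) $A_\lambda \cap B_\lambda=\emptyset$; (3) $|A_\lambda|,|B_\lambda| \leq \max(|\lambda|,\aleph_0) < \mathfrak{c}$; (4) there is a point $z \in \mathbb{R}^2_+$ that sees every point of $a^\lambda$ via $A_\lambda$, while no point $z\in\mathbb{R}^2_+$ sees all points of $K$ via $A_\lambda$.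
   Context: For $z \in \mathbb{R}^2_+$, $y \in \mathbb{R}^2_-$ and a subset $A$ of the $x$-axis, ''$z$ sees $y$ via $A$'' means that the segment $[z,y]$ is contained in $\mathbb{R}^2_+ \cup A \cup \mathbb{R}^2_-$ (equivalently, the intersection point of $[z,y]$ with the $x$-axis lies in $A$). For an ordinal $\lambda$, $|\lambda|$ denotes its cardinality (the cardinality of the set of ordinals smaller than $\lambda$). The axiom of choice is assumed. *)

From Stdlib Require Import Reals List.
Open Scope R_scope.

Definition point := (R * R)%type.

Definition upper (p : point) : Prop := 0 < snd p.
Definition lower (p : point) : Prop := snd p < 0.

Definition on_x_axis (p : point) : Prop := snd p = 0.

Definition seg_pt (z y : point) (t : R) : point :=
  ((1 - t) * fst z + t * fst y, (1 - t) * snd z + t * snd y).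

Definition sees (A : point -> Prop) (z y : point) : Prop :=
  forall t, 0 <= t <= 1 ->
    upper (seg_pt z y t) \/ A (seg_pt z y t) \/ lower (seg_pt z y t).

Definition has_card (S : point -> Prop) (n : nat) : Prop :=
  exists l : list point, NoDup l /\ length l = n /\ (forall p, S p <-> In p l).

Definition injective {X Y : Type} (f : X -> Y) : Prop :=
  forall x1 x2, f x1 = f x2 -> x1 = x2.

Definition card_le (X Y : Type) : Prop := exists f : X -> Y, injective f.

Definition card_eq_c (X : Type) : Prop :=
  exists f : X -> R, injective f /\ (forall r, exists x, f x = r).

Definition card_lt_c (X : Type) : Prop := ~ card_le R X.

Definition segment {O : Type} (lt : O -> O -> Prop) (l : O) : Type :=
  { a : O | lt a l }.

Definition strict_well_order {O : Type} (lt : O -> O -> Prop) : Prop :=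
  (forall x, ~ lt x x) /\
  (forall x y z, lt x y -> lt y z -> lt x z) /\
  (forall x y, lt x y \/ x = y \/ lt y x) /\
  well_founded lt.

Definition initial_ordinal_c (O : Type) (lt : O -> O -> Prop) : Prop :=
  strict_well_order lt /\ card_eq_c O /\
  (forall l : O, card_lt_c (segment lt l)).

From Stdlib Require Import Reals Lra Lia List Classical ClassicalEpsilon
  FunctionalExtensionality Runcountable Cantor Relations Wellfounded.
Open Scope R_scope.

(** [A_λ] consists of the points [(u, 0)] where [u] runs over the projections
    onto the x-axis of the points of [a^μ], [μ ≤ λ], from viewpoints [z_μ]
    chosen by transfinite recursion in the upper half-plane.  The recursion
    keeps the set [S] of abscissae chosen so far admissible: no [u ∈ S] lies on
    a secant of [K], and no upper point projects all of [K] into [S].  This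
    passes to unions of chains because [K] is finite.  At stage [λ] we have
    [|S| ≤ max(|λ|, ℵ₀) < 𝔠], and a viewpoint [(t, h)] that spoils
    admissibility is a zero of one of fewer than [𝔠] nonzero polynomials of
    degree at most 2 in [t] and in [h]: a point [z'] seeing [K] through the new
    set either projects two points of [K] into [S], and is then determined by
    two elements of [S]; or exactly one, with projection [q], and then the line
    joining that point to [(q, 0)] and the lines joining two other points of
    [K] to their new projections are concurrent, a determinant condition; or
    none, and then, as [|a^λ| < |K|], two points of [K] share a new projection,
    which lies on a secant of [K].  So a generic viewpoint works.
    The cardinal bounds rest on [κ·κ = κ] for infinite initial segments of [O]
    and on the uncountability of [ℝ]. *)

(** * Cardinal arithmetic *)

Lemma card_le_refl (A : Type) : card_le A A.
Proof. exists (fun x => x); intros x y H; exact H. Qed.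

Lemma card_le_trans (A B C : Type) : card_le A B -> card_le B C -> card_le A C.
Proof. intros [f Hf] [g Hg]; exists (fun x => g (f x)); intros x y H; apply Hf, Hg, H. Qed.

Lemma card_le_prod (A A' B B' : Type) :
  card_le A A' -> card_le B B' -> card_le (A * B) (A' * B').
Proof.
  intros [f Hf] [g Hg]; exists (fun p => (f (fst p), g (snd p))).
  intros [x1 y1] [x2 y2] H; injection H as H1 H2.
  now rewrite (Hf _ _ H1), (Hg _ _ H2).
Qed.

Lemma card_le_sum (A A' B B' : Type) :
  card_le A A' -> card_le B B' -> card_le (A + B) (A' + B').
Proof.
  intros [f Hf] [g Hg].
  exists (fun p => match p with inl x => inl (f x) | inr y => inr (g y) end).
  intros [x1|y1] [x2|y2] H; try discriminate; injection H as H.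
  - now rewrite (Hf _ _ H).
  - now rewrite (Hg _ _ H).
Qed.

Lemma card_le_inl (A B : Type) : card_le A (A + B).
Proof. exists inl; intros x y H; now injection H. Qed.

Lemma card_le_inr (A B : Type) : card_le B (A + B).
Proof. exists inr; intros x y H; now injection H. Qed.

Lemma card_le_of_surjective (A B : Type) (f : A -> B) :
  (forall b, exists a, f a = b) -> card_le B A.
Proof.
  intros Hsurj.
  exists (fun b => proj1_sig (constructive_indefinite_description _ (Hsurj b))).
  intros x y E.
  destruct (constructive_indefinite_description _ (Hsurj x)) as [ax Ex].
  destruct (constructive_indefinite_description _ (Hsurj y)) as [ay Ey].
  simpl in E; congruence.
Qed.

Lemma card_le_sig_weaken (A : Type) (P Q : A -> Prop) :
  (forall a, P a -> Q a) -> card_le {a | P a} {a | Q a}.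
Proof.
  intros HPQ; exists (fun x => exist Q (proj1_sig x) (HPQ _ (proj2_sig x))).
  intros [x Hx] [y Hy] E; injection E as E; subst y.
  f_equal; apply proof_irrelevance.
Qed.

Lemma card_le_sig (A : Type) (P : A -> Prop) : card_le {a | P a} A.
Proof.
  exists (@proj1_sig _ _); intros [x Hx] [y Hy] E; simpl in E; subst y.
  f_equal; apply proof_irrelevance.
Qed.

Lemma card_le_of_cover (A B : Type) (f : A -> B) (P : B -> Prop) :
  (forall b, P b -> exists a, f a = b) -> card_le {b | P b} A.
Proof.
  intros Hcov; apply card_le_trans with {a | P (f a)}; [|apply card_le_sig].
  apply (card_le_of_surjective _ _ (fun a => exist P (f (proj1_sig a)) (proj2_sig a))).
  intros [b Hb]; destruct (Hcov b Hb) as [a <-].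
  exists (exist _ a Hb); reflexivity.
Qed.

Definition finite_type (T : Type) := exists l : list T, forall x, In x l.

Lemma finite_type_prod (A B : Type) :
  finite_type A -> finite_type B -> finite_type (A * B).
Proof. intros [l1 H1] [l2 H2]; exists (list_prod l1 l2); intros [x y]; apply in_prod; auto. Qed.

Lemma finite_type_option (T : Type) : finite_type T -> finite_type (option T).
Proof. intros [l H]; exists (None :: map Some l); intros [x|]; simpl; auto using in_map. Qed.

Lemma finite_type_card_le_nat (T : Type) : finite_type T -> card_le T nat.
Proof.
  intros [[|d l] Hl]; [exists (fun _ => O); intros x; destruct (Hl x)|].
  assert (Hidx : forall x, exists n, nth n (d :: l) d = x).
  { intros x; destruct (In_nth _ x d (Hl x)) as [n [_ Hn]]; now exists n. }
  exists (fun x => proj1_sig (constructive_indefinite_description _ (Hidx x))).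
  intros x y E.
  destruct (constructive_indefinite_description _ (Hidx x)) as [n Hn].
  destruct (constructive_indefinite_description _ (Hidx y)) as [m Hm].
  simpl in E; subst; reflexivity.
Qed.

Lemma nat_not_card_le_finite (T : Type) : card_le nat T -> ~ finite_type T.
Proof.
  intros [f Hf] [l Hl].
  assert (Hnd : NoDup (map f (seq 0 (S (length l))))).
  { apply NoDup_map_NoDup_ForallPairs; [intros a b _ _ H; apply Hf, H|apply seq_NoDup]. }
  pose proof (NoDup_incl_length Hnd (fun x _ => Hl x)) as Hlen.
  rewrite length_map, length_seq in Hlen; lia.
Qed.

Lemma finite_type_or_nat (T : Type) : finite_type T \/ card_le nat T.
Proof.
  destruct (classic (finite_type T)) as [H|Hinf]; [now left|right].
  assert (Hfresh : forall l : list T, exists x, ~ In x l).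
  { intros l; apply NNPP; intros C; apply Hinf; exists l; intros x.
    apply NNPP; intros Cx; apply C; now exists x. }
  set (fresh l := proj1_sig (constructive_indefinite_description _ (Hfresh l))).
  assert (Hfr : forall l, ~ In (fresh l) l)
    by (intros l; exact (proj2_sig (constructive_indefinite_description _ (Hfresh l)))).
  set (prefix := fix prefix n := match n with O => nil | S n => fresh (prefix n) :: prefix n end).
  assert (Hin : forall n m, (m < n)%nat -> In (fresh (prefix m)) (prefix n)).
  { induction n as [|n IH]; intros m Hm; [lia|simpl].
    destruct (Nat.eq_dec m n) as [->|Hne]; [now left|right; apply IH; lia]. }
  exists (fun n => fresh (prefix n)); intros n m E.
  destruct (Nat.lt_trichotomy n m) as [Hlt|[Heq|Hlt]]; auto; exfalso.
  - apply (Hfr (prefix m)); rewrite <- E; now apply Hin.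
  - apply (Hfr (prefix n)); rewrite E; now apply Hin.
Qed.

Lemma option_card_le_infinite (T : Type) : card_le nat T -> card_le (option T) T.
Proof.
  intros [e He].
  set (shift x := match excluded_middle_informative (exists n, e n = x) with
                  | left H => e (S (proj1_sig (constructive_indefinite_description _ H)))
                  | right _ => x end).
  exists (fun o => match o with None => e O | Some x => shift x end).
  assert (Hshift0 : forall x, shift x <> e O).
  { intros x; unfold shift; destruct (excluded_middle_informative _) as [H|Hn].
    - intros E; apply He in E; discriminate.
    - intros E; apply Hn; now exists O. }
  assert (Hinj : forall x y, shift x = shift y -> x = y).
  { intros x y; unfold shift.
    destruct (excluded_middle_informative (exists n, e n = x)) as [Hx|Hx];
    destruct (excluded_middle_informative (exists n, e n = y)) as [Hy|Hy]; intros E.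
    - destruct (constructive_indefinite_description _ Hx) as [n Hn].
      destruct (constructive_indefinite_description _ Hy) as [m Hm].
      simpl in E; apply He in E; injection E as ->; congruence.
    - exfalso; apply Hy; eexists; exact E.
    - exfalso; apply Hx; eexists; symmetry; exact E.
    - exact E. }
  intros [x|] [y|] E; f_equal; auto.
  - now apply Hshift0 in E.
  - symmetry in E; now apply Hshift0 in E.
Qed.

Lemma nat_square_card_le : card_le (nat * nat) nat.
Proof.
  exists to_nat; intros p q E.
  now rewrite <- (cancel_of_to p), <- (cancel_of_to q), E.
Qed.

Lemma sum_card_le_prod (A B : Type) : card_le nat B -> card_le (A + A) (A * B).
Proof.
  intros [e He]; exists (fun s => match s with inl x => (x, e 0%nat) | inr x => (x, e 1%nat) end).
  intros [x|x] [y|y] E; injection E; try (intros ->; reflexivity);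
    intros E2 _; apply He in E2; discriminate.
Qed.

Lemma sum_nat_card_le (T : Type) : card_le nat T -> card_le (T * T) T -> card_le (T + nat) T.
Proof.
  intros Hinf Hsq; eapply card_le_trans; [apply card_le_sum; [apply card_le_refl|exact Hinf]|].
  eapply card_le_trans; [apply sum_card_le_prod, Hinf|exact Hsq].
Qed.

Lemma finite_sum_nat_card_le (T : Type) : finite_type T -> card_le (T + nat) nat.
Proof.
  intros Hfin; eapply card_le_trans;
    [apply card_le_sum; [apply finite_type_card_le_nat, Hfin|apply card_le_refl]|].
  apply sum_nat_card_le; [apply card_le_refl|apply nat_square_card_le].
Qed.

Lemma wf_minimal (T : Type) (lt : T -> T -> Prop) (P : T -> Prop) :
  well_founded lt -> (exists x, P x) -> exists x, P x /\ forall y, lt y x -> ~ P y.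
Proof.
  intros wf [x Hx]; induction (wf x) as [x _ IH].
  destruct (classic (exists y, lt y x /\ P y)) as [[y [Hyx Hy]]|Hmin].
  - exact (IH y Hyx Hy).
  - exists x; split; [exact Hx|]; intros y Hyx Hy; apply Hmin; now exists y.
Qed.

Lemma nat_enumeration (P : nat -> Prop) :
  (forall N, exists n, (N <= n)%nat /\ P n) ->
  exists e : nat -> nat, (forall n, P (e n)) /\ (forall n, (e n < e (S n))%nat) /\
    (forall m, P m -> exists n, e n = m).
Proof.
  intros Hunb.
  assert (Hleast : forall b, exists m, P m /\ (b <= m)%nat /\
                     forall m', P m' -> (b <= m')%nat -> (m <= m')%nat).
  { intros b.
    destruct (wf_minimal _ _ (fun m => P m /\ (b <= m)%nat) Wf_nat.lt_wf) as [m [[Pm Hbm] Hmin]].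
    { destruct (Hunb b) as [n [Hn Pn]]; now exists n. }
    exists m; repeat split; auto; intros m' Pm' Hbm'.
    destruct (Nat.le_gt_cases m m') as [Hle|Hgt]; [exact Hle|exfalso; now apply (Hmin m')]. }
  set (next b := proj1_sig (constructive_indefinite_description _ (Hleast b))).
  assert (Hnext : forall b, P (next b) /\ (b <= next b)%nat /\
                    forall m', P m' -> (b <= m')%nat -> (next b <= m')%nat)
    by (intros b; exact (proj2_sig (constructive_indefinite_description _ (Hleast b)))).
  set (e := fix e n := match n with O => next O | S n => next (S (e n)) end).
  assert (He : forall n, P (e n)) by (intros [|n]; apply Hnext).
  assert (Hinc : forall n, (e n < e (S n))%nat) by (intros n; apply (Hnext (S (e n)))).
  assert (Hge : forall n, (n <= e n)%nat) by (induction n; [lia|specialize (Hinc n); lia]).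
  exists e; split; [exact He|split; [exact Hinc|]].
  intros m Pm.
  destruct (wf_minimal _ _ (fun n => (m <= e n)%nat) Wf_nat.lt_wf) as [n [Hmn Hmin]].
  { exists m; apply Hge. }
  exists n; destruct n as [|p].
  - pose proof (proj2 (proj2 (Hnext O)) m Pm (Nat.le_0_l m)); simpl in *; lia.
  - assert (Hp : (e p < m)%nat) by (apply Nat.nlt_ge; intros H; apply (Hmin p); lia).
    pose proof (proj2 (proj2 (Hnext (S (e p)))) m Pm Hp); simpl in *; lia.
Qed.

Lemma R_not_card_le_nat : ~ card_le R nat.
Proof.
  intros [g Hg].
  destruct (nat_enumeration (fun n => exists r, g r = n)) as [e [He [Hinc Hcov]]].
  { intros N; apply NNPP; intros Hbnd.
    assert (Hlt : forall r, (g r < N)%nat).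
    { intros r; apply Nat.nle_gt; intros Hle; apply Hbnd; exists (g r); eauto. }
    assert (Hnd : NoDup (map (fun n => g (INR n)) (seq 0 (S N)))).
    { apply NoDup_map_NoDup_ForallPairs; [|apply seq_NoDup].
      intros a b _ _ E; apply INR_eq, Hg, E. }
    assert (Hincl : incl (map (fun n => g (INR n)) (seq 0 (S N))) (seq 0 N)).
    { intros x Hx; apply in_map_iff in Hx; destruct Hx as [n [<- _]].
      apply in_seq; specialize (Hlt (INR n)); lia. }
    pose proof (NoDup_incl_length Hnd Hincl) as Hlen.
    rewrite length_map, !length_seq in Hlen; lia. }
  assert (Hmono : forall n m, (n < m)%nat -> (e n < e m)%nat).
  { intros n m Hnm; induction Hnm; [apply Hinc|specialize (Hinc m); lia]. }
  assert (Heinj : forall n m, e n = e m -> n = m).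
  { intros n m E; destruct (Nat.lt_trichotomy n m) as [H|[H|H]];
      [specialize (Hmono _ _ H); lia|exact H|specialize (Hmono _ _ H); lia]. }
  set (u n := proj1_sig (constructive_indefinite_description _ (He n))).
  assert (Hu : forall n, g (u n) = e n)
    by (intros n; exact (proj2_sig (constructive_indefinite_description _ (He n)))).
  assert (Hidx : forall r, exists n, e n = g r) by (intros r; apply Hcov; now exists r).
  set (v r := proj1_sig (constructive_indefinite_description _ (Hidx r))).
  assert (Hv : forall r, e (v r) = g r)
    by (intros r; exact (proj2_sig (constructive_indefinite_description _ (Hidx r)))).
  apply (R_uncountable u); exists v; split.
  - intros n; apply Heinj; now rewrite Hv, Hu.
  - intros r; apply Hg; now rewrite Hu, Hv.
Qed.

Lemma wf_recursive_choice (X T : Type) (lt : X -> X -> Prop) (t0 : T)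
  (Good : X -> (X -> T) -> T -> Prop) :
  well_founded lt ->
  (forall x f g t, (forall y, lt y x -> f y = g y) -> Good x f t -> Good x g t) ->
  (forall x f, (forall y, lt y x -> Good y f (f y)) -> exists t, Good x f t) ->
  exists f : X -> T, forall x, Good x f (f x).
Proof.
  intros wf Hext Hex.
  set (below x (rec : forall y, lt y x -> T) y :=
         match excluded_middle_informative (lt y x) with
         | left H => rec y H | right _ => t0 end).
  set (F x rec := epsilon (inhabits t0) (Good x (below x rec))).
  set (f := Fix wf (fun _ => T) F).
  assert (Hf : forall x, f x = F x (fun y _ => f y)).
  { intros x; apply (Fix_eq wf (fun _ => T) F); intros x' r1 r2 Hr.
    assert (E : below x' r1 = below x' r2).
    { apply functional_extensionality; intros y; unfold below.
      destruct (excluded_middle_informative (lt y x')); auto. }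
    unfold F; now rewrite E. }
  assert (Hbelow : forall x y, lt y x -> below x (fun y _ => f y) y = f y).
  { intros x y Hyx; unfold below; now destruct (excluded_middle_informative (lt y x)). }
  exists f; intros x; induction (wf x) as [x _ IH].
  destruct (Hex x f IH) as [t Ht].
  apply (Hext x (below x (fun y _ => f y))); [intros y Hyx; now rewrite Hbelow|].
  rewrite Hf; apply epsilon_spec; exists t.
  apply (Hext x f); [intros y Hyx; now rewrite Hbelow|exact Ht].
Qed.

Lemma card_le_of_small_initial_segments (X Y : Type) (lt : X -> X -> Prop) (y0 : Y) :
  well_founded lt -> (forall v w, v <> w -> lt v w \/ lt w v) ->
  (forall w, ~ card_le Y {v | lt v w}) -> card_le X Y.
Proof.
  intros wf Htot Hsmall.
  destruct (wf_recursive_choice X Y lt y0 (fun w f y => forall v, lt v w -> f v <> y))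
    as [f Hf]; [exact wf|intros w f g y Hfg Hy v Hv; rewrite <- Hfg; auto| |].
  - intros w f _; apply NNPP; intros Hcov; apply (Hsmall w).
    apply (card_le_of_surjective _ _ (fun v => f (proj1_sig v))); intros y.
    apply NNPP; intros Hy; apply Hcov; exists y; intros v Hv E.
    apply Hy; now exists (exist _ v Hv).
  - exists f; intros v w E; apply NNPP; intros Hne.
    destruct (Htot v w Hne) as [H|H]; [apply (Hf w v H E)|apply (Hf v w H (eq_sym E))].
Qed.

Lemma card_le_list_members (T : Type) (l : list T) : card_le {x | In x l} nat.
Proof.
  assert (Hidx : forall x : {x | In x l}, exists n, nth_error l n = Some (proj1_sig x))
    by (intros [x Hx]; exact (In_nth_error l x Hx)).
  exists (fun x => proj1_sig (constructive_indefinite_description _ (Hidx x))).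
  intros [x Hx] [y Hy] E.
  destruct (constructive_indefinite_description _ (Hidx (exist _ x Hx))) as [n Hn].
  destruct (constructive_indefinite_description _ (Hidx (exist _ y Hy))) as [m Hm].
  simpl in *; subst m; rewrite Hn in Hm; injection Hm as ->; f_equal; apply proof_irrelevance.
Qed.

Section Absorbing.

Variable W : Type.
Hypothesis W_square : card_le (W * W) W.
Hypothesis W_infinite : card_le nat W.

Lemma card_le_prod_absorb (A B : Type) : card_le A W -> card_le B W -> card_le (A * B) W.
Proof. intros HA HB; eapply card_le_trans; [apply card_le_prod; eauto|exact W_square]. Qed.

Lemma card_le_sum_absorb (A B : Type) : card_le A W -> card_le B W -> card_le (A + B) W.
Proof.
  intros HA HB; eapply card_le_trans; [apply card_le_sum; eauto|].
  eapply card_le_trans; [apply sum_card_le_prod, W_infinite|exact W_square].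
Qed.

End Absorbing.

Lemma option_card_le_sum_nat (T : Type) : card_le (option T) (T + nat).
Proof.
  exists (fun o => match o with Some x => inl x | None => inr 0%nat end).
  intros [x|] [y|] E; try discriminate; [injection E as ->|]; reflexivity.
Qed.

(** * Initial segments of a well-order *)

Section WellOrder.

Variables (O : Type) (lt : O -> O -> Prop).
Hypothesis HW : strict_well_order lt.

Let lt_trans : forall x y z, lt x y -> lt y z -> lt x z := proj1 (proj2 HW).
Let lt_total : forall x y, lt x y \/ x = y \/ lt y x := proj1 (proj2 (proj2 HW)).
Let lt_wf : well_founded lt := proj2 (proj2 (proj2 HW)).

Definition ord_le (a b : O) := lt a b \/ a = b.

Lemma ord_le_trans a b c : ord_le a b -> ord_le b c -> ord_le a c.
Proof. intros [H1| <-] [H2| <-]; unfold ord_le; eauto. Qed.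

Lemma ord_le_lt_trans a b c : ord_le a b -> lt b c -> lt a c.
Proof. intros [H| <-] H'; eauto. Qed.

Lemma segment_card_le_mono m l : ord_le m l -> card_le (segment lt m) (segment lt l).
Proof.
  intros [Hml| <-]; [|apply card_le_refl].
  apply (card_le_sig_weaken O (fun a => lt a m) (fun a => lt a l)); eauto.
Qed.

Lemma closed_segment_card_le m : card_le {a | ord_le a m} (option (segment lt m)).
Proof.
  set (f (a : {a | ord_le a m}) :=
         match excluded_middle_informative (lt (proj1_sig a) m) with
         | left H => Some (exist (fun a => lt a m) (proj1_sig a) H) | right _ => None end).
  exists f; intros [x Hx] [y Hy]; unfold f; simpl.
  destruct (excluded_middle_informative (lt x m)) as [Hxm|Hxm];
  destruct (excluded_middle_informative (lt y m)) as [Hym|Hym]; intros E; try discriminate.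
  - injection E as ->; f_equal; apply proof_irrelevance.
  - destruct Hx as [|<-]; [contradiction|]; destruct Hy as [|<-]; [contradiction|].
    f_equal; apply proof_irrelevance.
Qed.

Lemma minimal_equipotent_segment l :
  exists l0, ord_le l0 l /\ card_le (segment lt l) (segment lt l0) /\
    forall d, lt d l0 -> ~ card_le (segment lt l0) (segment lt d).
Proof.
  destruct (wf_minimal O lt (fun x => card_le (segment lt l) (segment lt x)) lt_wf)
    as [l0 [Hl0 Hmin]]; [exists l; apply card_le_refl|].
  exists l0; split; [|split; [exact Hl0|]].
  - destruct (lt_total l0 l) as [H|[H|H]]; [now left|now right|].
    exfalso; exact (Hmin l H (card_le_refl _)).
  - intros d Hd Hle; apply (Hmin d Hd); eapply card_le_trans; eauto.
Qed.

Definition omax (a b : O) := if excluded_middle_informative (lt a b) then b else a.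

Lemma omax_cases a b : omax a b = a \/ omax a b = b.
Proof. unfold omax; destruct (excluded_middle_informative (lt a b)); auto. Qed.

Lemma omax_ge a b : ord_le a (omax a b) /\ ord_le b (omax a b).
Proof.
  unfold omax, ord_le; destruct (excluded_middle_informative (lt a b)); [tauto|].
  destruct (lt_total a b) as [H|[<-|H]]; tauto.
Qed.

(* Goedel's ordering of pairs: by maximum first, then lexicographically. *)
Definition godel (v w : O * O) :=
  slexprod O (O * O) lt (slexprod O O lt lt)
    (omax (fst v) (snd v), v) (omax (fst w) (snd w), w).

Lemma godel_wf : well_founded godel.
Proof.
  apply (wf_inverse_image _ _ _ (fun v => (omax (fst v) (snd v), v))).
  apply wf_slexprod; [exact lt_wf|apply wf_slexprod; exact lt_wf].
Qed.

Lemma godel_total v w : v <> w -> godel v w \/ godel w v.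
Proof.
  destruct v as [a b], w as [c d]; intros Hne; unfold godel; simpl.
  destruct (lt_total (omax a b) (omax c d)) as [H|[H|H]];
    [left; now constructor| |right; now constructor].
  rewrite H; destruct (lt_total a c) as [H1|[<-|H1]];
    [left; now do 2 constructor| |right; now do 2 constructor].
  destruct (lt_total b d) as [H2|[<-|H2]];
    [left; now do 2 constructor|congruence|right; now do 2 constructor].
Qed.

Lemma godel_bound v w :
  godel v w -> ord_le (fst v) (omax (fst w) (snd w)) /\ ord_le (snd v) (omax (fst w) (snd w)).
Proof.
  intros Hvw; assert (Hm : ord_le (omax (fst v) (snd v)) (omax (fst w) (snd w))).
  { inversion Hvw; subst; [now left|now right]. }
  destruct (omax_ge (fst v) (snd v)); split; eapply ord_le_trans; eauto.
Qed.

Definition pair_val {l : O} (v : segment lt l * segment lt l) : O * O :=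
  (proj1_sig (fst v), proj1_sig (snd v)).

Lemma pair_val_inj l : injective (@pair_val l).
Proof.
  intros [[a Ha] [b Hb]] [[c Hc] [d Hd]] E; unfold pair_val in E; simpl in E.
  injection E as -> ->; f_equal; f_equal; apply proof_irrelevance.
Qed.

Lemma godel_predecessors_card_le l (w : segment lt l * segment lt l) :
  let m := omax (fst (pair_val w)) (snd (pair_val w)) in
  card_le {v : segment lt l * segment lt l | godel (pair_val v) (pair_val w)}
    (option (segment lt m) * option (segment lt m)).
Proof.
  intros m; apply card_le_trans with ({a | ord_le a m} * {a | ord_le a m})%type;
    [|apply card_le_prod; apply closed_segment_card_le].
  exists (fun v : {v : segment lt l * segment lt l | godel (pair_val v) (pair_val w)} =>
            (exist _ (fst (pair_val (proj1_sig v))) (proj1 (godel_bound _ _ (proj2_sig v))),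
             exist _ (snd (pair_val (proj1_sig v))) (proj2 (godel_bound _ _ (proj2_sig v))))).
  intros [v Hv] [v' Hv'] E; injection E as E1 E2.
  assert (v = v') as -> by (apply pair_val_inj; unfold pair_val in *; congruence).
  f_equal; apply proof_irrelevance.
Qed.

(* Goedel's ordering of the square embeds into [segment lt l]: the predecessors
   of a pair lie in the square of a shorter segment, which is smaller than
   [segment lt l] by induction when [l] is minimal for its cardinality. *)
Lemma segment_square_initial l :
  (forall d, lt d l -> ~ card_le (segment lt l) (segment lt d)) ->
  card_le nat (segment lt l) -> card_le (segment lt l * segment lt l) (segment lt l).
Proof.
  induction (lt_wf l) as [l _ IH]; intros Hinit [e He].
  apply (card_le_of_small_initial_segments _ _
           (fun v w => godel (pair_val v) (pair_val w)) (e 0%nat)).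
  - exact (wf_inverse_image _ _ _ pair_val godel_wf).
  - intros v w Hne; apply godel_total; intros E; apply Hne, pair_val_inj, E.
  - intros w Hle.
    assert (Hsq := card_le_trans _ _ _ Hle (godel_predecessors_card_le l w)).
    set (m := omax (fst (pair_val w)) (snd (pair_val w))) in Hsq.
    assert (Hm : lt m l).
    { unfold m; destruct (omax_cases (fst (pair_val w)) (snd (pair_val w))) as [-> | ->];
        [exact (proj2_sig (fst w))|exact (proj2_sig (snd w))]. }
    destruct (finite_type_or_nat (segment lt m)) as [Hfin|Hnat].
    + apply (nat_not_card_le_finite (option (segment lt m) * option (segment lt m)));
        [exact (card_le_trans _ _ _ (ex_intro _ e He) Hsq)|].
      apply finite_type_prod; apply finite_type_option; exact Hfin.
    + destruct (minimal_equipotent_segment m) as [m0 [Hm0 [Hmm0 Hinit0]]].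
      assert (Hsq0 := IH m0 (ord_le_lt_trans _ _ _ Hm0 Hm) Hinit0
                         (card_le_trans _ _ _ Hnat Hmm0)).
      assert (Hopt : card_le (option (segment lt m)) (segment lt m0))
        by exact (card_le_trans _ _ _ (option_card_le_infinite _ Hnat) Hmm0).
      apply (Hinit m Hm).
      eapply card_le_trans; [exact Hsq|].
      eapply card_le_trans; [apply card_le_prod; exact Hopt|].
      eapply card_le_trans; [exact Hsq0|now apply segment_card_le_mono].
Qed.

Lemma segment_square l :
  card_le nat (segment lt l) -> card_le (segment lt l * segment lt l) (segment lt l).
Proof.
  intros Hinf; destruct (minimal_equipotent_segment l) as [l0 [Hl0 [Hll0 Hinit]]].
  eapply card_le_trans; [apply card_le_prod; exact Hll0|].
  eapply card_le_trans; [apply (segment_square_initial l0 Hinit); eapply card_le_trans; eauto|].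
  now apply segment_card_le_mono.
Qed.

Lemma segment_plus_nat_square l :
  card_le ((segment lt l + nat) * (segment lt l + nat)) (segment lt l + nat).
Proof.
  destruct (finite_type_or_nat (segment lt l)) as [Hfin|Hinf].
  - eapply card_le_trans; [apply card_le_prod; apply finite_sum_nat_card_le, Hfin|].
    eapply card_le_trans; [apply nat_square_card_le|apply card_le_inr].
  - assert (Hsq := segment_square l Hinf).
    assert (Habs := sum_nat_card_le _ Hinf Hsq).
    eapply card_le_trans; [apply card_le_prod; exact Habs|].
    eapply card_le_trans; [exact Hsq|apply card_le_inl].
Qed.

Lemma segment_plus_nat_lt_c l : card_lt_c (segment lt l) -> card_lt_c (segment lt l + nat).
Proof.
  intros Hlt HR; destruct (finite_type_or_nat (segment lt l)) as [Hfin|Hinf].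
  - apply R_not_card_le_nat; eapply card_le_trans; [exact HR|apply finite_sum_nat_card_le, Hfin].
  - apply Hlt; eapply card_le_trans; [exact HR|].
    apply sum_nat_card_le; [exact Hinf|exact (segment_square l Hinf)].
Qed.

End WellOrder.

Arguments ord_le {O} lt a b.

(** * Avoiding the zeros of fewer than continuum many polynomials *)

(* Twice the Lagrange basis polynomials for the nodes 0, 1, 2: [quadratic] and
   [biquadratic] say that interpolation on these nodes is exact, i.e. that the
   degree is at most 2 (in each variable). *)
Definition lag0 (x : R) := (x - 1) * (x - 2).
Definition lag1 (x : R) := -2 * x * (x - 2).
Definition lag2 (x : R) := x * (x - 1).

Definition quadratic (f : R -> R) :=
  forall x, 2 * f x = f 0 * lag0 x + f 1 * lag1 x + f 2 * lag2 x.

Definition biquadratic (G : R -> R -> R) := forall t h,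
  4 * G t h = G 0 0 * lag0 t * lag0 h + G 0 1 * lag0 t * lag1 h + G 0 2 * lag0 t * lag2 h
            + G 1 0 * lag1 t * lag0 h + G 1 1 * lag1 t * lag1 h + G 1 2 * lag1 t * lag2 h
            + G 2 0 * lag2 t * lag0 h + G 2 1 * lag2 t * lag1 h + G 2 2 * lag2 t * lag2 h.

Lemma quadratic_roots (f : R -> R) :
  quadratic f -> (exists x, f x <> 0) -> exists r1 r2, forall x, f x = 0 -> x = r1 \/ x = r2.
Proof.
  intros Hf [x0 Hx0].
  set (c2 := (f 0 - 2 * f 1 + f 2) / 2); set (c1 := (-3 * f 0 + 4 * f 1 - f 2) / 2).
  assert (Hc : forall x, f x = c2 * x * x + c1 * x + f 0).
  { intros x; pose proof (Hf x) as H; unfold lag0, lag1, lag2 in H; unfold c2, c1; lra. }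
  destruct (classic (exists r, f r = 0)) as [[r Hr]|Hnone];
    [|exists 0, 0; intros x Hx; exfalso; apply Hnone; now exists x].
  destruct (Req_dec c2 0) as [H2|H2].
  - exists r, r; intros x Hx; left; rewrite Hc, H2 in Hx, Hr.
    destruct (Req_dec c1 0) as [H1|H1].
    + exfalso; apply Hx0; rewrite Hc, H2, H1; rewrite H1 in Hx; lra.
    + apply (Rmult_eq_reg_l c1); [lra|exact H1].
  - exists r, (- c1 / c2 - r); intros x Hx; rewrite Hc in Hx, Hr.
    assert (E : (x - r) * (c2 * (x + r) + c1) = 0) by nra.
    apply Rmult_integral in E; destruct E as [E|E]; [left; lra|right].
    apply (Rmult_eq_reg_l c2); [|exact H2]; field_simplify; [lra|exact H2].
Qed.

Lemma biquadratic_quadratic_r (G : R -> R -> R) t : biquadratic G -> quadratic (G t).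
Proof.
  intros HG h.
  pose proof (HG t 0) as E0; pose proof (HG t 1) as E1; pose proof (HG t 2) as E2.
  pose proof (HG t h) as Eh; unfold lag0, lag1, lag2 in *; nra.
Qed.

Lemma biquadratic_quadratic_l (G : R -> R -> R) h :
  biquadratic G -> quadratic (fun t => G t h).
Proof.
  intros HG t.
  pose proof (HG 0 h) as E0; pose proof (HG 1 h) as E1; pose proof (HG 2 h) as E2.
  pose proof (HG t h) as Et; unfold lag0, lag1, lag2 in *; nra.
Qed.

Lemma avoid_two_values (X : Type) (bad : X -> R -> Prop) (g : R -> R) :
  injective g -> (forall x, exists r1 r2, forall v, bad x v -> v = r1 \/ v = r2) ->
  ~ card_le R (X * bool) -> exists r, forall x, ~ bad x (g r).
Proof.
  intros Hg Htwo HR; apply NNPP; intros Hall; apply HR.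
  (* Encode [r] by an [x] excluding [g r] and by which of its two values [g r] is. *)
  assert (Hbad : forall r, exists x, bad x (g r)).
  { intros r; apply NNPP; intros Hr; apply Hall; exists r; intros x Hx; apply Hr; now exists x. }
  set (culprit r := proj1_sig (constructive_indefinite_description _ (Hbad r))).
  assert (Hculprit : forall r, bad (culprit r) (g r))
    by (intros r; exact (proj2_sig (constructive_indefinite_description _ (Hbad r)))).
  assert (Hpair : forall x, exists p : R * R, forall v, bad x v -> v = fst p \/ v = snd p)
    by (intros x; destruct (Htwo x) as [r1 [r2 H]]; now exists (r1, r2)).
  set (roots x := proj1_sig (constructive_indefinite_description _ (Hpair x))).
  assert (Hroots : forall x v, bad x v -> v = fst (roots x) \/ v = snd (roots x))
    by (intros x; exact (proj2_sig (constructive_indefinite_description _ (Hpair x)))).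
  exists (fun r => (culprit r,
            if excluded_middle_informative (g r = fst (roots (culprit r))) then true else false)).
  intros r1 r2 E; injection E as Ex Eb; apply Hg.
  pose proof (Hroots _ _ (Hculprit r1)) as R1; pose proof (Hroots _ _ (Hculprit r2)) as R2.
  rewrite Ex in R1, Eb.
  destruct (excluded_middle_informative (g r1 = fst (roots (culprit r2)))) as [h1|h1];
  destruct (excluded_middle_informative (g r2 = fst (roots (culprit r2)))) as [h2|h2];
    try discriminate; [congruence|].
  destruct R1 as [R1|R1]; [contradiction|]; destruct R2 as [R2|R2]; [contradiction|congruence].
Qed.

Lemma biquadratic_avoid (X : Type) (G : X -> R -> R -> R) :
  (forall x, biquadratic (G x)) -> (forall x, exists t h, G x t h <> 0) ->
  ~ card_le R (X * bool) -> exists t h, 0 < h /\ forall x, G x t h <> 0.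
Proof.
  intros Hbq Hnz HR.
  destruct (avoid_two_values X (fun x h => forall t, G x t h = 0) exp) as [r Hr];
    [exact exp_inv| |exact HR|].
  { intros x; destruct (Hnz x) as [t0 [h0 H0]].
    destruct (quadratic_roots (G x t0)) as [r1 [r2 Hroots]];
      [apply biquadratic_quadratic_r, Hbq|now exists h0|].
    exists r1, r2; intros h Hh; apply Hroots, Hh. }
  destruct (avoid_two_values X (fun x t => G x t (exp r) = 0) (fun t => t)) as [t Ht];
    [intros a b E; exact E| |exact HR|].
  { intros x; apply quadratic_roots; [apply biquadratic_quadratic_l, Hbq|].
    apply not_all_ex_not, Hr. }
  exists t, (exp r); split; [apply exp_pos|exact Ht].
Qed.

(** * Projections onto the x-axis *)

Definition proj_axis (z y : point) : R := (fst y * snd z - fst z * snd y) / (snd z - snd y).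

Definition aligned (u : R) (y y' : point) := (fst y - u) * snd y' = (fst y' - u) * snd y.

Lemma proj_axis_spec (z y : point) (u : R) : upper z -> lower y ->
  proj_axis z y = u <-> aligned u y z.
Proof.
  unfold upper, lower, proj_axis, aligned; intros Hz Hy; split; intros H.
  - rewrite <- H; field; lra.
  - apply (Rmult_eq_reg_r (snd z - snd y)); [|lra]; field_simplify; lra.
Qed.

Lemma sees_iff (A : point -> Prop) (z y : point) : upper z -> lower y ->
  sees A z y <-> A (proj_axis z y, 0).
Proof.
  unfold upper, lower, sees, seg_pt; destruct z as [z1 z2], y as [y1 y2]; simpl.
  intros Hz Hy; set (t0 := z2 / (z2 - y2)).
  assert (Ht0 : 0 <= t0 <= 1).
  { unfold t0; split; [apply Rmult_le_pos; [lra|left; apply Rinv_0_lt_compat; lra]|].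
    apply (Rmult_le_reg_r (z2 - y2)); [lra|]; field_simplify; lra. }
  assert (Hcross : ((1 - t0) * z1 + t0 * y1, (1 - t0) * z2 + t0 * y2)
                   = (proj_axis (z1, z2) (y1, y2), 0))
    by (unfold proj_axis, t0; simpl; f_equal; field; lra).
  split.
  - intros H; specialize (H t0 Ht0); rewrite Hcross in H; unfold upper, lower in H; simpl in H.
    destruct H as [H|[H|H]]; [lra|exact H|lra].
  - intros HA t Ht; unfold upper, lower; simpl.
    destruct (Rtotal_order ((1 - t) * z2 + t * y2) 0) as [H|[H|H]]; [now right; right| |now left].
    right; left; replace t with t0; [now rewrite Hcross|].
    unfold t0; apply (Rmult_eq_reg_r (z2 - y2)); [|lra]; field_simplify; lra.
Qed.

Lemma proj_axis_aligned (z y y' : point) : upper z -> lower y -> lower y' ->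
  proj_axis z y = proj_axis z y' -> aligned (proj_axis z y) y y'.
Proof.
  intros Hz Hy Hy' E.
  assert (A1 := proj1 (proj_axis_spec z y _ Hz Hy) eq_refl).
  assert (A2 := proj1 (proj_axis_spec z y' _ Hz Hy') (eq_sym E)).
  set (p := proj_axis z y) in *; unfold aligned, upper in *.
  apply (Rmult_eq_reg_r (snd z)); [|lra].
  replace ((fst y - p) * snd y' * snd z) with ((fst y - p) * snd z * snd y') by ring.
  replace ((fst y' - p) * snd y * snd z) with ((fst y' - p) * snd z * snd y) by ring.
  rewrite A1, A2; ring.
Qed.

Lemma proj_axis_unique (z1 z2 y y' : point) :
  upper z1 -> upper z2 -> lower y -> lower y' ->
  proj_axis z1 y = proj_axis z2 y -> proj_axis z1 y' = proj_axis z2 y' ->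
  ~ aligned (proj_axis z1 y) y y' -> z1 = z2.
Proof.
  intros H1 H2 Hy Hy' Eu Ew Hna.
  set (u := proj_axis z1 y) in *; set (w := proj_axis z1 y') in *.
  assert (A1 := proj1 (proj_axis_spec z1 y u H1 Hy) eq_refl).
  assert (A2 := proj1 (proj_axis_spec z2 y u H2 Hy) (eq_sym Eu)).
  assert (B1 := proj1 (proj_axis_spec z1 y' w H1 Hy') eq_refl).
  assert (B2 := proj1 (proj_axis_spec z2 y' w H2 Hy') (eq_sym Ew)).
  unfold aligned, upper, lower in *.
  destruct z1 as [a1 a2], z2 as [b1 b2], y as [y1 y2], y' as [x1 x2]; simpl in *.
  destruct (Req_dec a2 b2) as [<-|Hne].
  - f_equal; apply (Rmult_eq_reg_r y2); [|lra]; lra.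
  - exfalso; apply Hna.
    assert (E1 : (y1 - u) * (a2 - b2) = (a1 - b1) * y2) by lra.
    assert (E2 : (x1 - w) * (a2 - b2) = (a1 - b1) * x2) by lra.
    assert (Hpar : (y1 - u) * x2 = (x1 - w) * y2).
    { apply (Rmult_eq_reg_r (a2 - b2)); [|lra].
      replace ((y1 - u) * x2 * (a2 - b2)) with (x2 * ((y1 - u) * (a2 - b2))) by ring.
      replace ((x1 - w) * y2 * (a2 - b2)) with (y2 * ((x1 - w) * (a2 - b2))) by ring.
      rewrite E1, E2; ring. }
    assert (Huw : u = w).
    { assert (E3 : (a1 - u) * (y2 * x2) = (a1 - w) * (y2 * x2)).
      { replace ((a1 - u) * (y2 * x2)) with ((a1 - u) * y2 * x2) by ring.
        replace ((a1 - w) * (y2 * x2)) with ((a1 - w) * x2 * y2) by ring.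
        rewrite <- A1, <- B1.
        replace ((y1 - u) * a2 * x2) with (a2 * ((y1 - u) * x2)) by ring.
        rewrite Hpar; ring. }
      apply Rmult_eq_reg_r in E3; [lra|nra]. }
    rewrite <- Huw in Hpar; exact Hpar.
Qed.

(* [(h - snd a) * (proj_axis (t, h) a - c)], with the denominator cleared. *)
Definition proj_poly (a : point) (c t h : R) := fst a * h - snd a * t - c * (h - snd a).

Lemma proj_poly_proj_axis (a : point) (t h : R) : 0 < h -> lower a ->
  proj_poly a (proj_axis (t, h) a) t h = 0.
Proof. unfold lower, proj_poly, proj_axis; simpl; intros; field; lra. Qed.

Lemma proj_poly_biquadratic (a : point) (c : R) : biquadratic (proj_poly a c).
Proof. intros t h; unfold proj_poly, lag0, lag1, lag2; ring. Qed.

Lemma proj_poly_nonzero (a : point) (c : R) : lower a -> exists t h, proj_poly a c t h <> 0.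
Proof. unfold lower, proj_poly; intros Ha; exists (c + 1), 0; lra. Qed.

Definition row_eval (r : R * R * R) (z : point) :=
  fst (fst r) * fst z + snd (fst r) * snd z + snd r.

Definition det3 (r1 r2 r3 : R * R * R) : R :=
  let '(a1, a2, a3) := r1 in let '(b1, b2, b3) := r2 in let '(c1, c2, c3) := r3 in
  a1 * (b2 * c3 - b3 * c2) - a2 * (b1 * c3 - b3 * c1) + a3 * (b1 * c2 - b2 * c1).

Lemma det3_common_root (r1 r2 r3 : R * R * R) (z : point) :
  row_eval r1 z = 0 -> row_eval r2 z = 0 -> row_eval r3 z = 0 -> det3 r1 r2 r3 = 0.
Proof.
  destruct r1 as [[a1 a2] a3], r2 as [[b1 b2] b3], r3 as [[c1 c2] c3]; unfold row_eval; simpl.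
  intros Ha Hb Hc.
  replace a3 with (- (a1 * fst z + a2 * snd z)) by lra.
  replace b3 with (- (b1 * fst z + b2 * snd z)) by lra.
  replace c3 with (- (c1 * fst z + c2 * snd z)) by lra; ring.
Qed.

(* The line through [y] and [(N / D, 0)], as the coefficients of an equation
   in the coordinates of its points, scaled by [D]. *)
Definition axis_row (y : point) (N D : R) : R * R * R := (- snd y * D, fst y * D - N, snd y * N).

Lemma axis_row_root (z y : point) (N D : R) : upper z -> lower y ->
  proj_axis z y * D = N -> row_eval (axis_row y N D) z = 0.
Proof.
  intros Hz Hy HND; assert (A := proj1 (proj_axis_spec z y _ Hz Hy) eq_refl).
  unfold aligned in A; unfold row_eval, axis_row; simpl; rewrite <- HND.
  set (p := proj_axis z y) in *.
  replace (- snd y * D * fst z + (fst y * D - p * D) * snd z + snd y * (p * D))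
    with (D * ((fst y - p) * snd z - (fst z - p) * snd y)) by ring.
  rewrite A; ring.
Qed.

(* Vanishes at [(t, h)] when the lines joining [yi] and [yj] to the projections
   of [ai] and [aj] from [(t, h)], and the line joining [ym] to [(q, 0)], are
   concurrent. *)
Definition concurrence_poly (yi ai yj aj ym : point) (q t h : R) :=
  det3 (axis_row yi (fst ai * h - snd ai * t) (h - snd ai))
       (axis_row yj (fst aj * h - snd aj * t) (h - snd aj))
       (axis_row ym q 1).

Lemma concurrence_poly_biquadratic yi ai yj aj ym q :
  biquadratic (concurrence_poly yi ai yj aj ym q).
Proof. intros t h; unfold concurrence_poly, det3, axis_row, lag0, lag1, lag2; simpl; ring. Qed.

Lemma concurrence_poly_at_0 yi ai yj aj ym q t :
  concurrence_poly yi ai yj aj ym q t 0 =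
  snd ai * snd aj * snd ym * (q - t) * (snd yj * (fst yi - t) - snd yi * (fst yj - t)).
Proof. unfold concurrence_poly, det3, axis_row; simpl; ring. Qed.

Lemma concurrence_poly_nonzero yi ai yj aj ym q :
  lower yi -> lower yj -> lower ai -> lower aj -> lower ym -> yi <> yj ->
  exists t h, concurrence_poly yi ai yj aj ym q t h <> 0.
Proof.
  unfold lower; intros Hyi Hyj Hai Haj Hym Hne.
  set (lam t := snd yj * (fst yi - t) - snd yi * (fst yj - t)).
  assert (Hlam : lam (q + 1) <> 0 \/ lam (q + 2) <> 0).
  { destruct (Req_dec (lam (q + 1)) 0) as [L1|L1]; [right|now left]; intros L2; apply Hne.
    unfold lam in L1, L2; destruct yi as [xi si], yj as [xj sj]; simpl in *.
    assert (si = sj) by lra; subst sj; f_equal; apply (Rmult_eq_reg_r si); lra. }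
  destruct Hlam as [H|H]; [exists (q + 1)|exists (q + 2)]; exists 0;
    rewrite concurrence_poly_at_0; unfold lam in H;
    repeat apply Rmult_integral_contrapositive_currified; lra.
Qed.

(** * One step of the construction *)

Definition secant_axis (y y' : point) := (fst y' * snd y - fst y * snd y') / (snd y - snd y').

Lemma aligned_secant_axis (u : R) (y y' : point) :
  snd y <> snd y' -> aligned u y y' -> u = secant_axis y y'.
Proof.
  unfold aligned, secant_axis; intros Hs Ha.
  apply (Rmult_eq_reg_r (snd y - snd y')); [|lra]; field_simplify; lra.
Qed.

Definition viewpoint (u w : R) (y y' : point) : point :=
  epsilon (inhabits (0, 1)) (fun z => upper z /\ proj_axis z y = u /\ proj_axis z y' = w).

Lemma viewpoint_eq (z y y' : point) : upper z -> lower y -> lower y' ->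
  ~ aligned (proj_axis z y) y y' -> viewpoint (proj_axis z y) (proj_axis z y') y y' = z.
Proof.
  intros Hz Hy Hy' Hna; unfold viewpoint.
  set (P z' := upper z' /\ proj_axis z' y = proj_axis z y /\ proj_axis z' y' = proj_axis z y').
  destruct (epsilon_spec (inhabits (0, 1)) P) as [Hv [Ev Ev']]; [exists z; unfold P; tauto|].
  symmetry; apply (proj_axis_unique z _ y y'); auto.
Qed.

Definition on_secant (lK : list point) (u : R) :=
  exists y y', In y lK /\ In y' lK /\ y <> y' /\ aligned u y y'.

Definition admissible (lK : list point) (S : R -> Prop) :=
  (forall u, S u -> ~ on_secant lK u) /\
  ~ (exists z, upper z /\ forall y, In y lK -> S (proj_axis z y)).

Definition projections (z : point) (la : list point) (u : R) :=
  exists a, In a la /\ u = proj_axis z a.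

Lemma pigeonhole (A B : Type) (f : A -> B) (l : list A) (l' : list B) :
  NoDup l -> (forall x, In x l -> In (f x) l') -> (length l' < length l)%nat ->
  exists x y, In x l /\ In y l /\ x <> y /\ f x = f y.
Proof.
  intros Hnd Hin Hlen; apply NNPP; intros Hinj.
  assert (Hnd' : NoDup (map f l)).
  { apply NoDup_map_NoDup_ForallPairs; [|exact Hnd].
    intros x y Hx Hy E; apply NNPP; intros Hne; apply Hinj; now exists x, y. }
  assert (Hincl : incl (map f l) l').
  { intros b Hb; apply in_map_iff in Hb; destruct Hb as [x [<- Hx]]; now apply Hin. }
  pose proof (NoDup_incl_length Hnd' Hincl); rewrite length_map in *; lia.
Qed.

Lemma two_others (T : Type) (l : list T) (m : T) : NoDup l -> (3 <= length l)%nat ->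
  exists y y', In y l /\ In y' l /\ y <> y' /\ y <> m /\ y' <> m.
Proof.
  destruct l as [|x1 [|x2 [|x3 l]]]; simpl; intros Hnd Hlen; try lia.
  apply NoDup_cons_iff in Hnd as [N1 Hnd]; apply NoDup_cons_iff in Hnd as [N2 _].
  simpl in N1, N2.
  destruct (classic (m = x1)) as [->|H1]; [exists x2, x3|].
  { repeat split; simpl; auto; intros E; subst; tauto. }
  destruct (classic (m = x2)) as [->|H2]; [exists x1, x3|exists x1, x2];
    repeat split; simpl; auto; intros E; subst; tauto.
Qed.

Section Extension.

Variables (lK la : list point) (S : R -> Prop) (t h : R).
Hypothesis lK_nodup : NoDup lK.
Hypothesis lK_length : (3 <= length lK)%nat.
Hypothesis la_short : (length la < length lK)%nat.
Hypothesis lK_lower : forall y, In y lK -> lower y.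
Hypothesis la_lower : forall a, In a la -> lower a.
Hypothesis HS : admissible lK S.
Hypothesis h_pos : 0 < h.
Hypothesis avoid_secants : forall y y' a, In y lK -> In y' lK -> In a la ->
  snd y <> snd y' -> proj_poly a (secant_axis y y') t h <> 0.
Hypothesis avoid_viewpoints : forall u w y y' y'' a, S u -> S w ->
  In y lK -> In y' lK -> In y'' lK -> In a la ->
  proj_poly a (proj_axis (viewpoint u w y y') y'') t h <> 0.
Hypothesis avoid_concurrence : forall q yi yj ym ai aj, S q ->
  In yi lK -> In yj lK -> In ym lK -> In ai la -> In aj la -> yi <> yj ->
  concurrence_poly yi ai yj aj ym q t h <> 0.

Lemma projections_off_secants u : projections (t, h) la u -> ~ on_secant lK u.
Proof.
  intros [a [Ha ->]] [y [y' [Hy [Hy' [Hne Hal]]]]].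
  destruct (Req_dec (snd y) (snd y')) as [Es|Es].
  - apply Hne; pose proof (lK_lower y Hy) as Hlow; unfold aligned, lower in *.
    rewrite <- Es in Hal; destruct y as [x s], y' as [x' s']; simpl in *; subst s'.
    f_equal; apply (Rmult_eq_reg_r s); lra.
  - apply (avoid_secants y y' a Hy Hy' Ha Es).
    rewrite <- (aligned_secant_axis _ _ _ Es Hal); apply proj_poly_proj_axis; auto.
Qed.

Lemma two_in_S_absurd z' y y' : upper z' ->
  (forall y, In y lK -> S (proj_axis z' y) \/ projections (t, h) la (proj_axis z' y)) ->
  In y lK -> In y' lK -> y <> y' -> S (proj_axis z' y) -> S (proj_axis z' y') -> False.
Proof.
  intros Hz' Hall Hy Hy' Hne Sy Sy'.
  assert (Hview : viewpoint (proj_axis z' y) (proj_axis z' y') y y' = z').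
  { apply viewpoint_eq; auto; intros Hal; apply (proj1 HS _ Sy); now exists y, y'. }
  destruct (classic (exists y'', In y'' lK /\ ~ S (proj_axis z' y'')))
    as [[y'' [Hy'' Sy'']]|Hall_S].
  - destruct (Hall y'' Hy'') as [|[a [Ha Ea]]]; [contradiction|].
    apply (avoid_viewpoints _ _ y y' y'' a Sy Sy' Hy Hy' Hy'' Ha).
    rewrite Hview, Ea; apply proj_poly_proj_axis; auto.
  - apply (proj2 HS); exists z'; split; [exact Hz'|]; intros y'' Hy''.
    apply NNPP; intros Sy''; apply Hall_S; now exists y''.
Qed.

Lemma one_in_S_absurd z' ym yi yj : upper z' ->
  In ym lK -> S (proj_axis z' ym) -> In yi lK -> In yj lK -> yi <> yj ->
  projections (t, h) la (proj_axis z' yi) -> projections (t, h) la (proj_axis z' yj) -> False.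
Proof.
  intros Hz' Hym Sym Hyi Hyj Hne [ai [Hai Ei]] [aj [Haj Ej]].
  apply (avoid_concurrence _ yi yj ym ai aj Sym Hyi Hyj Hym Hai Haj Hne).
  pose proof (proj_poly_proj_axis ai t h h_pos (la_lower ai Hai)) as Pi.
  pose proof (proj_poly_proj_axis aj t h h_pos (la_lower aj Haj)) as Pj.
  unfold proj_poly in Pi, Pj.
  apply (det3_common_root _ _ _ z'); apply axis_row_root; auto;
    [rewrite Ei; lra|rewrite Ej; lra|ring].
Qed.

Lemma all_in_projections_absurd z' : upper z' ->
  (forall y, In y lK -> projections (t, h) la (proj_axis z' y)) -> False.
Proof.
  intros Hz' Hall.
  destruct (pigeonhole _ _ (proj_axis z') lK (map (proj_axis (t, h)) la))
    as [y [y' [Hy [Hy' [Hne E]]]]];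
    [exact lK_nodup| |now rewrite length_map|].
  { intros y Hy; destruct (Hall y Hy) as [a [Ha ->]]; now apply in_map. }
  apply (projections_off_secants _ (Hall y Hy)); exists y, y'; repeat split; auto.
  apply proj_axis_aligned; auto.
Qed.

Lemma admissible_extension : admissible lK (fun u => S u \/ projections (t, h) la u).
Proof.
  split; [intros u [Hu|Hu]; [exact (proj1 HS u Hu)|exact (projections_off_secants u Hu)]|].
  intros [z' [Hz' Hall]].
  destruct (classic (exists y y', In y lK /\ In y' lK /\ y <> y' /\
                      S (proj_axis z' y) /\ S (proj_axis z' y')))
    as [[y [y' [Hy [Hy' [Hne [Sy Sy']]]]]]|Hnot2];
    [exact (two_in_S_absurd z' y y' Hz' Hall Hy Hy' Hne Sy Sy')|].
  destruct (classic (exists ym, In ym lK /\ S (proj_axis z' ym))) as [[ym [Hym Sym]]|Hnot1].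
  - destruct (two_others _ lK ym lK_nodup lK_length) as [yi [yj [Hyi [Hyj [Hij [Him Hjm]]]]]].
    assert (Hproj : forall y, In y lK -> y <> ym -> projections (t, h) la (proj_axis z' y)).
    { intros y Hy Hym'; destruct (Hall y Hy) as [Sy|]; [|assumption].
      exfalso; apply Hnot2; exists y, ym; tauto. }
    exact (one_in_S_absurd z' ym yi yj Hz' Hym Sym Hyi Hyj Hij
             (Hproj yi Hyi Him) (Hproj yj Hyj Hjm)).
  - apply (all_in_projections_absurd z' Hz'); intros y Hy.
    destruct (Hall y Hy) as [Sy|]; [|assumption].
    exfalso; apply Hnot1; now exists y.
Qed.

End Extension.

(* The polynomials whose non-vanishing at [(t, h)] guarantees that adding the
   projections from [(t, h)] keeps [S] admissible (cf. [admissible_extension]). *)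
Definition bad_polys (lK la : list point) (S : R -> Prop) (G : R -> R -> R) :=
  (exists y y' a, In y lK /\ In y' lK /\ In a la /\ snd y <> snd y' /\
     G = proj_poly a (secant_axis y y')) \/
  (exists u w y y' y'' a, S u /\ S w /\ In y lK /\ In y' lK /\ In y'' lK /\ In a la /\
     G = proj_poly a (proj_axis (viewpoint u w y y') y'')) \/
  (exists q yi yj ym ai aj, S q /\ In yi lK /\ In yj lK /\ In ym lK /\ In ai la /\
     In aj la /\ yi <> yj /\ G = concurrence_poly yi ai yj aj ym q).

Lemma bad_polys_card_le (W : Type) (lK la : list point) (S : R -> Prop) :
  card_le (W * W) W -> card_le nat W -> card_le {u | S u} W ->
  card_le {G | bad_polys lK la S G} W.
Proof.
  intros W_square W_infinite S_small.
  set (K := {y | In y lK}); set (A := {a | In a la}); set (Su := {u | S u}).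
  apply card_le_trans with
    (((K * K * A) + (Su * Su * K * K * K * A)) + (Su * K * K * K * A * A))%type.
  - apply (card_le_of_cover _ _ (fun i => match i with
      | inl (inl (y, y', a)) => proj_poly (proj1_sig a) (secant_axis (proj1_sig y) (proj1_sig y'))
      | inl (inr (u, w, y, y', y'', a)) =>
          proj_poly (proj1_sig a)
            (proj_axis (viewpoint (proj1_sig u) (proj1_sig w) (proj1_sig y) (proj1_sig y'))
               (proj1_sig y''))
      | inr (q, yi, yj, ym, ai, aj) =>
          concurrence_poly (proj1_sig yi) (proj1_sig ai) (proj1_sig yj) (proj1_sig aj)
            (proj1_sig ym) (proj1_sig q)
      end)).
    intros G [(y & y' & a & Hy & Hy' & Ha & _ & ->)|
              [(u & w & y & y' & y'' & a & Su' & Sw & Hy & Hy' & Hy'' & Ha & ->)|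
               (q & yi & yj & ym & ai & aj & Sq & Hyi & Hyj & Hym & Hai & Haj & _ & ->)]].
    + exists (inl (inl (exist _ y Hy, exist _ y' Hy', exist _ a Ha))); reflexivity.
    + exists (inl (inr (exist _ u Su', exist _ w Sw, exist _ y Hy, exist _ y' Hy',
                        exist _ y'' Hy'', exist _ a Ha))); reflexivity.
    + exists (inr (exist _ q Sq, exist _ yi Hyi, exist _ yj Hyj, exist _ ym Hym,
                   exist _ ai Hai, exist _ aj Haj)); reflexivity.
  - assert (K_small : card_le K W)
      by (eapply card_le_trans; [apply card_le_list_members|exact W_infinite]).
    assert (A_small : card_le A W)
      by (eapply card_le_trans; [apply card_le_list_members|exact W_infinite]).
    repeat first [apply (card_le_sum_absorb W W_square W_infinite)
                 | apply (card_le_prod_absorb W W_square)]; assumption.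
Qed.

Lemma bad_polys_nonzero_biquadratic (lK la : list point) (S : R -> Prop) G :
  (forall y, In y lK -> lower y) -> (forall a, In a la -> lower a) ->
  bad_polys lK la S G -> biquadratic G /\ exists t h, G t h <> 0.
Proof.
  intros lK_lower la_lower
    [(y & y' & a & _ & _ & Ha & _ & ->)|
     [(u & w & y & y' & y'' & a & _ & _ & _ & _ & _ & Ha & ->)|
      (q & yi & yj & ym & ai & aj & _ & Hyi & Hyj & Hym & Hai & Haj & Hne & ->)]];
    split; auto using proj_poly_biquadratic, proj_poly_nonzero,
                      concurrence_poly_biquadratic, concurrence_poly_nonzero.
Qed.

Lemma admissible_extension_exists (W : Type) (lK la : list point) (S : R -> Prop) :
  card_le (W * W) W -> card_le nat W -> ~ card_le R W -> card_le {u | S u} W ->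
  NoDup lK -> (3 <= length lK)%nat -> (length la < length lK)%nat ->
  (forall y, In y lK -> lower y) -> (forall a, In a la -> lower a) ->
  admissible lK S -> exists z, upper z /\ admissible lK (fun u => S u \/ projections z la u).
Proof.
  intros W_square W_infinite W_small S_small lK_nodup lK_length la_short lK_lower la_lower HS.
  destruct (biquadratic_avoid {G | bad_polys lK la S G} (@proj1_sig _ _)) as [t [h [h_pos Hnz]]].
  - intros [G HG]; exact (proj1 (bad_polys_nonzero_biquadratic _ _ _ G lK_lower la_lower HG)).
  - intros [G HG]; exact (proj2 (bad_polys_nonzero_biquadratic _ _ _ G lK_lower la_lower HG)).
  - intros HR; apply W_small; eapply card_le_trans; [exact HR|].
    apply card_le_prod_absorb; [exact W_square|apply bad_polys_card_le; assumption|].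
    eapply card_le_trans; [|exact W_infinite].
    exists (fun b : bool => if b then 1%nat else 0%nat); intros [|] [|] E; easy.
  - assert (Hbad : forall G, bad_polys lK la S G -> G t h <> 0)
      by (intros G HG; exact (Hnz (exist _ G HG))).
    exists (t, h); split; [exact h_pos|].
    apply admissible_extension; auto; intros; apply Hbad.
    + left; exists y, y', a; repeat split; auto.
    + right; left; exists u, w, y, y', y'', a; repeat split; auto.
    + right; right; exists q, yi, yj, ym, ai, aj; repeat split; auto.
Qed.

(** * The transfinite construction *)

Lemma admissible_iff (lK : list point) (S S' : R -> Prop) :
  (forall u, S u <-> S' u) -> admissible lK S -> admissible lK S'.
Proof.
  intros HSS' [Hsec Hview]; split; [intros u Hu; apply Hsec, HSS', Hu|].
  intros [z [Hz Hall]]; apply Hview; exists z; split; [exact Hz|intros y Hy; apply HSS', Hall, Hy].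
Qed.

Lemma axis_points_card_le (S : R -> Prop) :
  card_le {p : point | snd p = 0 /\ S (fst p)} {u | S u}.
Proof.
  exists (fun p => exist S (fst (proj1_sig p)) (proj2 (proj2_sig p))).
  intros [[x1 x2] [E2 Hx]] [[y1 y2] [E2' Hy]] E; simpl in *; injection E as ->; subst.
  f_equal; apply proof_irrelevance.
Qed.

Section Tower.

Variables (O : Type) (lt : O -> O -> Prop).
Hypothesis HW : strict_well_order lt.
Variables (lK : list point) (la : O -> list point).

Let lt_total : forall x y, lt x y \/ x = y \/ lt y x := proj1 (proj2 (proj2 HW)).

Definition below (f : O -> point) (l : O) (u : R) :=
  exists m, lt m l /\ projections (f m) (la m) u.

Definition upto (f : O -> point) (l : O) (u : R) :=
  exists m, ord_le lt m l /\ projections (f m) (la m) u.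

Lemma upto_below f l u : upto f l u <-> below f l u \/ projections (f l) (la l) u.
Proof.
  split; [intros [m [[Hml| <-] Hu]]; [left; now exists m|now right]|].
  intros [[m [Hml Hu]]|Hu];
    [exists m; split; [now left|exact Hu]|exists l; split; [now right|exact Hu]].
Qed.

Lemma upto_mono f l l' u : lt l l' -> upto f l u -> upto f l' u.
Proof.
  intros Hll' [m [Hml Hu]]; exists m; split; [left; eapply ord_le_lt_trans; eauto|exact Hu].
Qed.

Lemma below_ext f g l u : (forall m, lt m l -> f m = g m) -> below f l u -> below g l u.
Proof. intros Hfg [m [Hm Hu]]; exists m; split; [exact Hm|now rewrite <- Hfg]. Qed.

Lemma upto_card_le f l : card_le {u | upto f l u} (segment lt l + nat).
Proof.
  eapply card_le_trans; [|apply (segment_plus_nat_square O lt HW l)].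
  apply card_le_trans with ({m | ord_le lt m l} * nat)%type.
  - apply (card_le_of_cover _ _ (fun p => proj_axis (f (proj1_sig (fst p)))
                                             (nth (snd p) (la (proj1_sig (fst p))) (0, 0)))).
    intros u [m [Hml [a [Ha ->]]]].
    destruct (In_nth (la m) a (0, 0) Ha) as [n [_ Hn]].
    exists (exist _ m Hml, n); cbn [fst snd proj1_sig]; now rewrite Hn.
  - apply card_le_prod; [|apply card_le_inr].
    eapply card_le_trans; [apply closed_segment_card_le|apply option_card_le_sum_nat].
Qed.

Lemma finite_below_bound (P : O -> R -> Prop) (l : O) (L : list R) :
  (forall u, In u L -> exists m, lt m l /\ P m u) ->
  L = nil \/ exists m, lt m l /\ forall u, In u L -> exists m', ord_le lt m' m /\ P m' u.
Proof.
  induction L as [|u L IH]; intros HL; [now left|right].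
  destruct (HL u (or_introl eq_refl)) as [mu [Hmu Pu]].
  assert (Hu : forall m, ord_le lt mu m -> exists m', ord_le lt m' m /\ P m' u)
    by (intros m Hm; now exists mu).
  destruct (IH (fun u' Hu' => HL u' (or_intror Hu'))) as [->|[m [Hm HLm]]].
  - exists mu; split; [exact Hmu|]; intros u' [<-|[]]; apply Hu; now right.
  - destruct (lt_total mu m) as [H|[<-|H]].
    + exists m; split; [exact Hm|]; intros u' [<-|Hu']; [apply Hu; now left|auto].
    + exists mu; split; [exact Hm|]; intros u' [<-|Hu']; [apply Hu; now right|auto].
    + exists mu; split; [exact Hmu|]; intros u' [<-|Hu']; [apply Hu; now right|].
      destruct (HLm u' Hu') as [m' [Hm' Pm']]; exists m'; split; [|exact Pm'].
      apply (ord_le_trans O lt HW _ m); [exact Hm'|now left].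
Qed.

Lemma admissible_below f l : lK <> nil ->
  (forall m, lt m l -> admissible lK (upto f m)) -> admissible lK (below f l).
Proof.
  intros HK Hup; split.
  - intros u [m [Hml Hu]]; apply (proj1 (Hup m Hml)); exists m; split; [now right|exact Hu].
  - intros [z [Hz Hall]].
    destruct (finite_below_bound (fun m => projections (f m) (la m)) l (map (proj_axis z) lK))
      as [E|[m [Hml Hm]]].
    + intros u Hu; apply in_map_iff in Hu; destruct Hu as [y [<- Hy]]; exact (Hall y Hy).
    + now destruct lK; [|discriminate].
    + apply (proj2 (Hup m Hml)); exists z; split; [exact Hz|].
      intros y Hy; apply Hm, in_map, Hy.
Qed.

Lemma admissible_tower :
  (forall l, card_lt_c (segment lt l)) -> NoDup lK -> (3 <= length lK)%nat ->
  (forall l, (length (la l) < length lK)%nat) ->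
  (forall y, In y lK -> lower y) -> (forall l a, In a (la l) -> lower a) ->
  exists f : O -> point, forall l, upper (f l) /\ admissible lK (upto f l).
Proof.
  intros Hseg lK_nodup lK_length la_short lK_lower la_lower.
  assert (HK : lK <> nil) by (intros E; rewrite E in lK_length; simpl in lK_length; lia).
  destruct (wf_recursive_choice O point lt (0, 1)
              (fun l f z => upper z /\
                 admissible lK (fun u => below f l u \/ projections z (la l) u)))
    as [f Hf].
  - exact (proj2 (proj2 (proj2 HW))).
  - intros l f g z Hfg [Hz Hadm]; split; [exact Hz|].
    apply (admissible_iff lK (fun u => below f l u \/ projections z (la l) u)); [|exact Hadm].
    intros u; split; intros [Hu|Hu]; auto; left; revert Hu; apply below_ext; auto.
    intros m Hm; symmetry; auto.
  - intros l f IH.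
    assert (Hbelow : admissible lK (below f l)).
    { apply admissible_below; [exact HK|intros m Hm].
      apply (admissible_iff _ _ _ (fun u => iff_sym (upto_below f m u)) (proj2 (IH m Hm))). }
    destruct (admissible_extension_exists (segment lt l + nat) lK (la l) (below f l))
      as [z [Hz Hadm]]; auto.
    + apply (segment_plus_nat_square O lt HW).
    + apply card_le_inr.
    + apply (segment_plus_nat_lt_c O lt HW), Hseg.
    + eapply card_le_trans; [|apply (upto_card_le f l)].
      apply card_le_sig_weaken; intros u Hu; apply upto_below; now left.
    + apply la_lower.
    + now exists z.
  - exists f; intros l; destruct (Hf l) as [Hz Hadm]; split; [exact Hz|].
    apply (admissible_iff _ _ _ (fun u => iff_sym (upto_below f l u)) Hadm).
Qed.

End Tower.

Theorem proposition2p3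
  (k : nat) (hk : (2 <= k)%nat)
  (K : point -> Prop)
  (HKcard : has_card K (S k)) (HKlow : forall y, K y -> lower y)
  (O : Type) (lt : O -> O -> Prop) (HO : initial_ordinal_c O lt)
  (a : O -> point -> Prop)
  (Ha_in_U : forall l, has_card (a l) k /\ (forall y, a l y -> lower y))
  (Ha_inj : forall l1 l2, (forall p, a l1 p <-> a l2 p) -> l1 = l2)
  (Ha_surj : forall Sk : point -> Prop,
      has_card Sk k -> (forall y, Sk y -> lower y) ->
      exists l, forall p, a l p <-> Sk p) :
  exists A B : O -> point -> Prop,
    (forall l1 l2, lt l1 l2 ->
       (forall p, A l1 p -> A l2 p) /\ (forall p, B l1 p -> B l2 p)) /\
    (forall l,
       (* (1) *)
       (forall p, A l p -> on_x_axis p) /\ (forall p, B l p -> on_x_axis p) /\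
       (* (2) *)
       (forall p, ~ (A l p /\ B l p)) /\
       (* (3) |A_l|, |B_l| <= max(|l|, aleph_0) < c *)
       card_le {p | A l p} (segment lt l + nat)%type /\
       card_le {p | B l p} (segment lt l + nat)%type /\
       card_lt_c (segment lt l + nat)%type /\
       (* (4) *)
       (exists z, upper z /\ forall y, a l y -> sees (A l) z y) /\
       ~ (exists z, upper z /\ forall y, K y -> sees (A l) z y)).
Proof.
  destruct HO as [HW [_ Hseg]].
  destruct HKcard as [lK [lK_nodup [lK_length HK]]].
  destruct (choice (fun l s => NoDup s /\ length s = k /\ forall p, a l p <-> In p s))
    as [la Hla]; [intros l; exact (proj1 (Ha_in_U l))|].
  assert (la_lower : forall l y, In y (la l) -> lower y)
    by (intros l y Hy; apply (proj2 (Ha_in_U l)), (proj2 (proj2 (Hla l))), Hy).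
  destruct (admissible_tower O lt HW lK la Hseg lK_nodup) as [f Hf];
    [lia|intros l; rewrite (proj1 (proj2 (Hla l))); lia|
     intros y Hy; apply HKlow, HK, Hy|exact la_lower|].
  exists (fun l p => snd p = 0 /\ upto O lt la f l (fst p)), (fun _ _ => False); split.
  { intros l1 l2 Hl; split; [|tauto]; intros p [Hp Hu]; split; [exact Hp|].
    exact (upto_mono O lt HW la f l1 l2 _ Hl Hu). }
  intros l; destruct (Hf l) as [Hz [_ Hnone]].
  repeat split; try tauto.
  - eapply card_le_trans; [apply axis_points_card_le|apply (upto_card_le O lt HW la f l)].
  - exists (fun p => False_rect _ (proj2_sig p)); intros [p []].
  - exact (segment_plus_nat_lt_c O lt HW l (Hseg l)).
  - exists (f l); split; [exact Hz|]; intros y Hy.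
    apply sees_iff; [exact Hz|exact (proj2 (Ha_in_U l) y Hy)|]; split; [reflexivity|].
    exists l; split; [now right|]; exists y; split; [apply (proj2 (proj2 (Hla l))), Hy|reflexivity].
  - intros [z [Hz' Hsees]]; apply Hnone; exists z; split; [exact Hz'|]; intros y Hy.
    assert (Hlow : lower y) by (apply HKlow, HK, Hy).
    exact (proj2 (proj1 (sees_iff _ z y Hz' Hlow) (Hsees y (proj2 (HK y) Hy)))).
Qed.
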